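(* Let $N\ge 1$ and let $A\subset\Gamma=\mathbb N_0^s$ be a monomial degree reducing universal interpolation set of order $N$. Then $A$ contains every lower set $B\subset\Gamma$ with $1\le \#B\le N$, i.e. \[ A\supseteq \bigcup_{j=1}^N\ \bigcup_{B\in L_j(\Gamma)} B . \]
   Context: $\Pi=\mathbb C[x_1,\dots,x_s]$, $\deg$ is total degree with $\deg 0<0$. For $A\subset\Gamma=\mathbb N_0^s$, $\Pi_A$ is the span of the monomials $x^\alpha$, $\alpha\in A$. A subspace $\mathcal P\subseteq\Pi$ is a degree reducing universal interpolation space of order $N$ if for every finite $X\subset\mathbb C^s$ with $\#X\le N$ and every $q\in\Pi$ there is $p\in\mathcal P$ with $p|_X=q|_X$ and $\deg p\le\deg q$. A set $A\subset\Gamma$ is a monomial degree reducing universal interpolation set of order $N$ if $\Pi_A$ is a degree reducing universal interpolation space of order $N$. For $\alpha,\beta\in\Gamma$, $\alpha\le\beta$ means $\alpha_j\le\beta_j$ for all $j$; $B\subset\Gamma$ is a lower set if $\alpha\in B$ and $\beta\le\alpha$ imply $\beta\in B$; $L_j(\Gamma)$ denotes the set of lower sets of cardinality $j$. *)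

From HB Require Import structures.
From mathcomp Require Import all_boot all_order all_algebra.
From mathcomp Require Import mpoly complex.
From mathcomp Require Import reals.
Set Implicit Arguments. Unset Strict Implicit. Unset Printing Implicit Defensive.
Import Order.TTheory GRing.Theory Num.Theory.
Local Open Scope ring_scope.

Definition in_PiA (s : nat) (K : nzRingType) (A : 'X_{1..s} -> Prop)
  (p : {mpoly K[s]}) : Prop :=
  forall m : 'X_{1..s}, m \in msupp p -> A m.

Definition evalpt (s : nat) (K : comNzRingType) (p : {mpoly K[s]})
  (x : 'rV[K]_s) : K := p.@[fun i => x ord0 i].

(* Degree reducing universal interpolation space of order N, for the
   subspace Pi_A.  deg p <= deg q is expressed with msize (= 1 + total degree,
   and msize 0 = 0), which matches the convention deg 0 < 0. *)
Definition monomial_DRUI_set (s : nat) (K : comNzRingType)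
  (A : 'X_{1..s} -> Prop) (N : nat) : Prop :=
  forall (X : seq 'rV[K]_s), uniq X -> (size X <= N)%N ->
  forall q : {mpoly K[s]},
  exists p : {mpoly K[s]},
    [/\ in_PiA A p,
        (forall x, x \in X -> evalpt p x = evalpt q x) &
        (msize p <= msize q)%N].

Definition mnm_cle (s : nat) (a b : 'X_{1..s}) : Prop :=
  forall i : 'I_s, (a i <= b i)%N.

(* Lower set (B is a finite set given by a duplicate-free sequence). *)
Definition lower_set (s : nat) (B : seq 'X_{1..s}) : Prop :=
  forall a b : 'X_{1..s}, a \in B -> mnm_cle b a -> b \in B.

(* Take b in a lower set B of size at most N; the grid box {a : a <= b}
   lies in B.  Tensor products of dual Vandermonde weights give a linear
   functional L supported on the box with L(x^a) = [a = b] whenever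
   deg a <= deg b.  A polynomial p of degree at most deg b interpolating x^b
   on the box satisfies L p = L(x^b) = 1, so its coefficient of x^b is
   nonzero, and p in Pi_A forces b in A. *)
From HB Require Import structures.
From mathcomp Require Import all_boot all_order all_algebra.
From mathcomp Require Import mpoly complex.
From mathcomp Require Import reals.
Set Implicit Arguments. Unset Strict Implicit. Unset Printing Implicit Defensive.
Import Order.TTheory GRing.Theory Num.Theory.
Local Open Scope ring_scope.

Lemma dual_Vandermonde_weights (F : numFieldType) (n : nat) :
  exists c : nat -> F, (forall j, (n < j)%N -> c j = 0) /\
    forall m, (m <= n)%N -> \sum_(j < n.+1) c j * j%:R ^+ m = (m == n)%:R.
Proof.
pose V := Vandermonde n.+1 (\row_(j < n.+1) (j%:R : F)).
have V_unit : V \in unitmx.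
  rewrite unitmxE det_Vandermonde unitfE; apply/prodf_neq0 => i _.
  apply/prodf_neq0 => j ij; rewrite !mxE subr_eq0 eq_sym eqr_nat.
  by rewrite neq_ltn ij.
pose e : 'cV[F]_n.+1 := \col_i ((i == n :> nat)%:R).
pose w := invmx V *m e.
exists (fun j => if (j < n.+1)%N then w (inord j) 0 else 0); split.
  by move=> j nj; rewrite ltnNge nj.
move=> m mn; have := congr1 (fun A : 'cV[F]_n.+1 => A (inord m) 0) (mulKVmx V_unit e).
rewrite /w !mxE inordK // => <-.
apply: eq_bigr => j _; rewrite ltn_ord !mxE inord_val mulrC inordK //.
Qed.

Lemma eq_mnm_of_le_mdeg (s : nat) (m1 m2 : 'X_{1..s}) :
  (forall i, m1 i <= m2 i)%N -> (mdeg m2 <= mdeg m1)%N -> m1 = m2.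
Proof.
move=> /mnm_lepP le12 deg21.
have : (mdeg (m2 - m1)%MM == 0)%N.
  by move: deg21; rewrite -{1}(submK le12) mdegD -{2}[mdeg m1]add0n leq_add2r leqn0.
by rewrite mdeg_eq0 => /eqP diff0; rewrite -(submK le12) diff0 add0m.
Qed.

Section BoxFunctional.

Variables (K : numFieldType) (s : nat) (b : 'X_{1..s}).

(* A common coordinate range makes the weighted sum over the grid factor
   coordinatewise; the weights vanish off the box. *)
Local Notation grid := {ffun 'I_s -> 'I_(mdeg b).+1}.

Definition grid_pt (f : grid) : 'rV[K]_s := \row_i (f i)%:R.

Definition in_box (f : grid) : bool := [forall i, f i <= b i]%N.

Definition box_grid : seq 'rV[K]_s := map grid_pt [seq f <- enum grid | in_box f].

Lemma grid_pt_inj : injective grid_pt.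
Proof.
move=> f g /rowP fg; apply/ffunP => i; apply/val_inj.
by have := fg i; rewrite !mxE => /eqP; rewrite eqr_nat => /eqP.
Qed.

Lemma box_grid_uniq : uniq box_grid.
Proof. by rewrite (map_inj_uniq grid_pt_inj) filter_uniq ?enum_uniq. Qed.

Lemma size_box_grid_le (B : seq 'X_{1..s}) :
  lower_set B -> b \in B -> (size box_grid <= size B)%N.
Proof.
move=> lowB bB; pose mnm_of (f : grid) := [multinom (f i : nat) | i < s].
have mnm_of_inj : injective mnm_of.
  move=> f g /mnmP fg; apply/ffunP => i; apply/val_inj.
  by have := fg i; rewrite !mnmE.
rewrite size_map -(size_map mnm_of) uniq_leq_size //.
  by rewrite (map_inj_uniq mnm_of_inj) filter_uniq ?enum_uniq.
move=> a /mapP [f]; rewrite mem_filter => /andP[/forallP f_box _] ->.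
by apply: (lowB b) => // i; rewrite mnmE.
Qed.

Variable c : 'I_s -> nat -> K.
Hypothesis c_out : forall i j, (b i < j)%N -> c i j = 0.
Hypothesis c_moment : forall i m, (m <= b i)%N ->
  \sum_(j < (b i).+1) c i j * j%:R ^+ m = (m == b i)%:R.

Definition box_weight (f : grid) : K := \prod_i c i (f i).

Definition box_functional (p : {mpoly K[s]}) : K :=
  \sum_(f : grid) box_weight f * evalpt p (grid_pt f).

Lemma box_weight_out f : ~~ in_box f -> box_weight f = 0.
Proof.
rewrite negb_forall => /existsP [k]; rewrite -ltnNge => out_k.
by rewrite /box_weight (bigD1 k) //= c_out // mul0r.
Qed.

Lemma eq_box_functional p q :
  {in box_grid, forall x, evalpt p x = evalpt q x} ->
  box_functional p = box_functional q.
Proof.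
move=> pq; apply: eq_bigr => f _; have [f_box | f_out] := boolP (in_box f).
  by rewrite pq // map_f // mem_filter f_box mem_enum.
by rewrite box_weight_out // !mul0r.
Qed.

Lemma box_functionalE p :
  box_functional p = \sum_(m <- msupp p) p@_m * box_functional 'X_[m].
Proof.
rewrite /box_functional /evalpt.
under eq_bigr => f _ do rewrite mevalE mulr_sumr.
rewrite exchange_big /=; apply: eq_bigr => m _; rewrite mulr_sumr.
by apply: eq_bigr => f _; rewrite mevalX mulrCA.
Qed.

Lemma box_functionalX a :
  box_functional 'X_[a] = \prod_i \sum_(j < (mdeg b).+1) c i j * j%:R ^+ a i.
Proof.
rewrite bigA_distr_bigA; apply: eq_bigr => f _.
rewrite /box_weight /evalpt mevalX -big_split /=.
by apply: eq_bigr => i _; rewrite mxE.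
Qed.

Lemma moment_widen i m : (m <= b i)%N ->
  \sum_(j < (mdeg b).+1) c i j * j%:R ^+ m = (m == b i)%:R.
Proof.
have b_le : (b i < (mdeg b).+1)%N by rewrite ltnS mdegE (bigD1 i) //= leq_addr.
move=> m_le; rewrite -c_moment // (big_ord_widen _ (fun j => c i j * j%:R ^+ m) b_le).
rewrite [RHS]big_mkcond; apply: eq_bigr => j _ /=.
by case: ltnP => // j_out; rewrite c_out ?mul0r.
Qed.

Lemma box_functionalX_low a :
  (mdeg a <= mdeg b)%N -> box_functional 'X_[a] = (a == b)%:R.
Proof.
move=> deg_a; rewrite box_functionalX; have [-> | a_neq_b] := eqVneq a b.
  by apply: big1 => i _; rewrite moment_widen // eqxx.
have : ~~ [forall i, b i <= a i]%N.
  by apply: contra_neqN a_neq_b => /forallP le_ba; rewrite (eq_mnm_of_le_mdeg le_ba).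
rewrite negb_forall => /existsP [k]; rewrite -ltnNge => lt_k.
by rewrite (bigD1 k) //= moment_widen ?(ltnW lt_k) // (ltn_eqF lt_k) mul0r.
Qed.

Lemma box_interpolant_coef p :
  {in box_grid, forall x, evalpt p x = evalpt 'X_[b] x} ->
  (msize p <= msize 'X_[K, b])%N -> b \in msupp p.
Proof.
move=> p_interp deg_p; apply/negPn/negP => b_notin.
have := eq_box_functional p_interp; rewrite box_functionalX_low // eqxx.
rewrite box_functionalE big1_seq => [/esym/eqP | m /= m_supp]; first by rewrite oner_eq0.
have m_low : (mdeg m <= mdeg b)%N.
  by rewrite -ltnS -(msizeX K b); apply: leq_trans (msize_mdeg_lt m_supp) deg_p.
rewrite box_functionalX_low //; case: eqP => [m_b | _]; last by rewrite mulr0.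
by rewrite -m_b m_supp in b_notin.
Qed.

End BoxFunctional.

Lemma mem_msupp_box_interpolant (K : numFieldType) (s : nat) (b : 'X_{1..s})
  (p : {mpoly K[s]}) :
  {in box_grid K b, forall x, evalpt p x = evalpt 'X_[b] x} ->
  (msize p <= msize 'X_[K, b])%N -> b \in msupp p.
Proof.
have [c c_spec] := fin_all_exists (fun i => @dual_Vandermonde_weights K (b i)).
by apply: (box_interpolant_coef (fun i => proj1 (c_spec i)) (fun i => proj2 (c_spec i))).
Qed.

Theorem theorem18 (R : realType) (s N : nat) (A : 'X_{1..s} -> Prop) :
  (1 <= N)%N ->
  monomial_DRUI_set (R[i])%C A N ->
  forall B : seq 'X_{1..s}, uniq B -> (1 <= size B <= N)%N -> lower_set B ->
  forall b : 'X_{1..s}, b \in B -> A b.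
Proof.
move=> _ A_DRUI B _ /andP[_ size_B] lowB b bB.
have box_small := leq_trans (size_box_grid_le (R[i])%C lowB bB) size_B.
have [p [pA p_interp deg_p]] := A_DRUI _ (box_grid_uniq _ b) box_small 'X_[b].
by apply/pA/mem_msupp_box_interpolant => // x /p_interp.
Qed.
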